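(* If a state $\Phi$ satisfies $D_{\min,\mathbb{F}}(\Phi)=D_{s,\mathbb{F}}(\Phi)=:r$, then for every $\epsilon\in[0,1)$, $$D^\epsilon_{H,\mathbb{F}}(\Phi)=r+\log\tfrac{1}{1-\epsilon},\qquad D^\epsilon_{\max,\mathbb{F}}(\Phi)=D^\epsilon_{s,\mathbb{F}}(\Phi)=\max\{r-\log\tfrac{1}{1-\epsilon},0\}.$$ If instead $\Phi$ satisfies $D_{\min,\mathrm{aff}(\mathbb{F})}(\Phi)=D_{\max,\mathbb{F}}(\Phi)=:r$, then for every $\epsilon\in[0,1)$, $$D^\epsilon_{H,\mathrm{aff}(\mathbb{F})}(\Phi)=D^\epsilon_{H,\mathbb{F}}(\Phi)=r+\log\tfrac{1}{1-\epsilon},\qquad D^\epsilon_{\max,\mathbb{F}}(\Phi)=\max\{r-\log\tfrac{1}{1-\epsilon},0\}.$$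
   Context: Finite-dimensional Hilbert space, $\log$ base 2. $\mathbb{F}$ is a convex and closed set of (free) states. $F(\rho,\sigma)=\|\sqrt\rho\sqrt\sigma\|_1^2$. $D_H^\epsilon(\rho\|\sigma)=\sup\{-\log\mathrm{Tr}[P\sigma]:0\le P\le\mathbb{1},\mathrm{Tr}[P\rho]\ge1-\epsilon\}$ (also used for Hermitian $\sigma$); $D_{\min}(\rho\|\sigma)=D_H^0(\rho\|\sigma)=-\log\mathrm{Tr}[\Pi_\rho\sigma]$. $D^\epsilon_{H,\mathbb{F}}(\rho)=\inf_{\sigma\in\mathbb{F}}D_H^\epsilon(\rho\|\sigma)$, $D_{\min,\mathbb{F}}=D^0_{H,\mathbb{F}}$; $\mathrm{aff}(\mathbb{F})$ is the affine hull, $D^\epsilon_{H,\mathrm{aff}(\mathbb{F})}(\rho)=\inf_{\sigma\in\mathrm{aff}(\mathbb{F})}D^\epsilon_H(\rho\|\sigma)$, $D_{\min,\mathrm{aff}(\mathbb{F})}=D^0_{H,\mathrm{aff}(\mathbb{F})}$. $D_{\max,\mathbb{F}}(\rho)=\inf\{\log(1+s):\frac{\rho+s\tau}{1+s}\in\mathbb{F},\tau\text{ a state}\}$; $D_{s,\mathbb{F}}(\rho)=\inf\{\log(1+s):\frac{\rho+s\tau}{1+s}\in\mathbb{F},\tau\in\mathbb{F}\}$. Smoothed: $D^\epsilon_{\max,\mathbb{F}}(\rho)=\inf\{D_{\max,\mathbb{F}}(\rho'):F(\rho',\rho)\ge1-\epsilon\}$ and $D^\epsilon_{s,\mathbb{F}}(\rho)=\inf\{D_{s,\mathbb{F}}(\rho'):F(\rho',\rho)\ge1-\epsilon\}$,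 infima over states $\rho'$. *)

From HB Require Import structures.
From mathcomp Require Import all_boot all_order all_algebra.
From mathcomp Require Import complex.
From mathcomp Require Import all_classical all_reals.
From mathcomp Require Import ereal topology normedtype exp.
Set Implicit Arguments. Unset Strict Implicit. Unset Printing Implicit Defensive.
Import Order.TTheory GRing.Theory Num.Theory.
Import numFieldNormedType.Exports.
Local Open Scope classical_set_scope.
Local Open Scope ring_scope.

Section Quantum.
Variables (R : realType) (n : nat).
Local Notation C := R[i].
Local Notation M := 'M[C]_n.

Definition adjmx (m k : nat) (A : 'M[C]_(m, k)) : 'M[C]_(k, m) :=
  (map_mx Num.conj A)^T.

(* positive semidefinite: <v, A v> >= 0 for all v (implies Hermitian over C) *)
Definition psd (A : M) : Prop :=
  forall v : 'cV[C]_n, 0 <= (adjmx v *m A *m v) 0 0.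

Definition is_state (rho : M) : Prop := psd rho /\ \tr rho = 1.

Definition is_effect (P : M) : Prop := psd P /\ psd (1%:M - P).

Definition psd_sqrt (A : M) : M := xget 0 [set S : M | psd S /\ S *m S = A].

Definition trnorm (A : M) : R := complex.Re (\tr (psd_sqrt (adjmx A *m A))).

Definition fidelity (rho sigma : M) : R :=
  trnorm (psd_sqrt rho *m psd_sqrt sigma) ^+ 2.

Definition log2 (t : R) : R := ln t / ln 2.

Definition mlog2 (t : R) : \bar R :=
  if t <= 0 then +oo%E else (- log2 t)%:E.

Definition DH (eps : R) (rho sigma : M) : \bar R :=
  ereal_sup [set mlog2 (complex.Re (\tr (P *m sigma))) | P in
             [set P : M | is_effect P /\ 1 - eps <= complex.Re (\tr (P *m rho))]].

Definition DH_over (eps : R) (S : set M) (rho : M) : \bar R :=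
  ereal_inf [set DH eps rho sigma | sigma in S].

Definition aff (S : set M) : set M :=
  [set X : M | exists (k : nat) (lam : 'I_k -> R) (sig : 'I_k -> M),
      (forall i, S (sig i)) /\ \sum_(i < k) lam i = 1 /\
      X = \sum_(i < k) (lam i)%:C%C *: sig i].

Definition DminF (S : set M) (rho : M) : \bar R := DH_over 0 S rho.
Definition DminAff (S : set M) (rho : M) : \bar R := DH_over 0 (aff S) rho.

Definition DmaxF (S : set M) (rho : M) : \bar R :=
  ereal_inf [set (log2 (1 + s))%:E | s in
    [set s : R | 0 <= s /\ exists tau : M, is_state tau /\
                  S (((1 + s)^-1)%:C%C *: (rho + s%:C%C *: tau))]].

Definition DsF (S : set M) (rho : M) : \bar R :=
  ereal_inf [set (log2 (1 + s))%:E | s in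
    [set s : R | 0 <= s /\ exists tau : M, S tau /\
                  S (((1 + s)^-1)%:C%C *: (rho + s%:C%C *: tau))]].

Definition DmaxF_eps (eps : R) (S : set M) (rho : M) : \bar R :=
  ereal_inf [set DmaxF S rho' | rho' in
    [set rho' : M | is_state rho' /\ 1 - eps <= fidelity rho' rho]].

Definition DsF_eps (eps : R) (S : set M) (rho : M) : \bar R :=
  ereal_inf [set DsF S rho' | rho' in
    [set rho' : M | is_state rho' /\ 1 - eps <= fidelity rho' rho]].

Definition convex_states (S : set M) : Prop :=
  forall (s1 s2 : M) (t : R), S s1 -> S s2 -> 0 <= t <= 1 ->
    S (t%:C%C *: s1 + (1 - t)%:C%C *: s2).

End Quantum.

Section Closed.
Variables (R : realType) (n : nat).
Local Notation M := 'M[R[i]]_n.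
(* closedness of a set of matrices in the (Euclidean) topology of C^{n x n},
   stated sequentially: limits of entrywise convergent sequences in S stay in S *)
Definition closed_mx (S : set M) : Prop :=
  forall (u : nat -> M) (X : M), (forall k, S (u k)) ->
    (forall i j, ((fun k => complex.Re (u k i j)) @ \oo --> complex.Re (X i j)) /\
                 ((fun k => complex.Im (u k i j)) @ \oo --> complex.Im (X i j))) ->
    S X.
End Closed.

(* Write D_T for the max-relative entropy whose admixed state ranges over T, so that
   D_max,F = D_T for T the set of all states and D_s,F = D_F.  For T a set of states:
   - rescaling a test by 1 - eps gives D_H^eps >= D_min + log 1/(1-eps);
   - if (Phi + s tau)/(1 + s) is free with tau in T, a test accepting Phi with
     probability >= 1 - eps accepts it with probability >= (1 - eps)/(1 + s), so
     D_H^eps <= log(1+s) + log 1/(1-eps); since F(rho', Phi) <= Tr[P rho'] whenever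
     Tr[P Phi] = 1, the same argument bounds D_T^eps(Phi) below by
     D_min - log 1/(1-eps);
   - mixing tau into Phi with weight t, 1 + t = min(1/(1-eps), 1 + s), yields a state
     eps-close to Phi in fidelity whose D_T is at most log(1+s) - log(1+t).
   Under either hypothesis these lower and upper bounds meet. *)

From HB Require Import structures.
From mathcomp Require Import all_boot all_order all_algebra.
From mathcomp Require Import complex.
From mathcomp Require Import all_classical all_reals.
From mathcomp Require Import ereal topology normedtype exp.
From mathcomp Require Import sesquilinear spectral.
From mathcomp.algebra_tactics Require Import ring lra.
Set Implicit Arguments. Unset Strict Implicit. Unset Printing Implicit Defensive.
Import Order.TTheory GRing.Theory Num.Theory.
Import numFieldNormedType.Exports.
Local Open Scope classical_set_scope.
Local Open Scope ring_scope.

Section RealInequalities.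
Variable R : realType.

Lemma sqrt_mul_le (c g l : R) : 0 <= c -> 0 <= l -> c * g ^+ 2 <= l ^+ 2 ->
  Num.sqrt c * g <= l.
Proof.
move=> c_ge0 l_ge0; rewrite -{1}[c]sqr_sqrtr // -exprMn.
have := sqrtr_ge0 c; set s := Num.sqrt c => s_ge0 h; nra.
Qed.

Lemma two_mul_le_add (z x y : R) : 0 <= x -> 0 <= y -> z ^+ 2 <= x * y -> 2 * z <= x + y.
Proof. by move=> x_ge0 y_ge0 hz; have := sqr_ge0 (x - y); nra. Qed.

Lemma sqr_sum_le_mul_sum (I : finType) (a b c : I -> R) :
  (forall i, 0 <= b i) -> (forall i, 0 <= c i) -> (forall i, a i ^+ 2 <= b i * c i) ->
  (\sum_i a i) ^+ 2 <= (\sum_i b i) * (\sum_i c i).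
Proof.
move=> b_ge0 c_ge0 abc; rewrite -(ler_pM2l (_ : 0 < 2)) // expr2 !big_distrlr.
have -> : 2 * \sum_i \sum_j b i * c j = \sum_i \sum_j (b i * c j + b j * c i).
  rewrite mulr_natl mulr2n {2}exchange_big -big_split; apply: eq_bigr => i _.
  by rewrite -big_split.
rewrite mulr_sumr; apply: ler_sum => i _; rewrite mulr_sumr; apply: ler_sum => j _.
apply: two_mul_le_add; rewrite ?mulr_ge0 // exprMn.
apply: le_trans (ler_pM _ _ (abc i) (abc j)) _; rewrite ?sqr_ge0 //; lra.
Qed.

End RealInequalities.

Section ComplexReal.
Variable R : realType.
Local Notation C := R[i].

Lemma Re_ge0 (x : C) : 0 <= x -> 0 <= complex.Re x.
Proof. by rewrite lecE => /andP[_]. Qed.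

Lemma RRe_ge0 (x : C) : 0 <= x -> (complex.Re x)%:C%C = x.
Proof. by move=> x_ge0; rewrite RRe_real // ger0_real. Qed.

Lemma ReCM (c : R) (z : C) : complex.Re (c%:C%C * z) = c * complex.Re z.
Proof. by case: z => x y /=; rewrite mul0r subr0. Qed.

End ComplexReal.

Section Adjoint.
Variable R : realType.
Local Notation C := R[i].
Local Open Scope sesquilinear_scope.

Lemma adjmxE m k (A : 'M[C]_(m, k)) i j : adjmx A i j = (A j i)^*.
Proof. by rewrite /adjmx !mxE. Qed.

Lemma adjmx_trmxC m k (A : 'M[C]_(m, k)) : adjmx A = A ^t*.
Proof. by rewrite /adjmx map_trmx. Qed.

Lemma adjmxM m k l (A : 'M[C]_(m, k)) (B : 'M[C]_(k, l)) :
  adjmx (A *m B) = adjmx B *m adjmx A.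
Proof. by rewrite /adjmx map_mxM trmx_mul. Qed.

Lemma adjmxK m k (A : 'M[C]_(m, k)) : adjmx (adjmx A) = A.
Proof. by apply/matrixP => i j; rewrite !adjmxE conjCK. Qed.

Lemma adjmxD m k (A B : 'M[C]_(m, k)) : adjmx (A + B) = adjmx A + adjmx B.
Proof. by apply/matrixP => i j; rewrite !mxE rmorphD. Qed.

Lemma adjmxZ m k (c : C) (A : 'M[C]_(m, k)) : adjmx (c *: A) = c^* *: adjmx A.
Proof. by apply/matrixP => i j; rewrite !mxE rmorphM. Qed.

Lemma adjmx_delta n (i : 'I_n) : adjmx (delta_mx i 0 : 'cV[C]_n) = delta_mx 0 i.
Proof. by apply/matrixP => a b; rewrite adjmxE !mxE rmorph_nat andbC. Qed.

Lemma mulmx_subZ m n k l (U : 'M[C]_(m, n)) (A B : 'M[C]_(n, k)) (V : 'M[C]_(k, l)) c :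
  U *m (A - c *: B) *m V = U *m A *m V - c *: (U *m B *m V).
Proof. by rewrite mulmxBr mulmxBl -scalemxAr -scalemxAl. Qed.

Lemma unitary_conjM n (U A B : 'M[C]_n) : adjmx U *m U = 1%:M ->
  U *m (A *m B) *m adjmx U = (U *m A *m adjmx U) *m (U *m B *m adjmx U).
Proof. by move=> U'U; rewrite !mulmxA -(mulmxA _ (adjmx U) U) U'U mulmx1. Qed.

Lemma mxtrace_unitary_conj n (U A : 'M[C]_n) : adjmx U *m U = 1%:M ->
  \tr (U *m A *m adjmx U) = \tr A.
Proof. by move=> U'U; rewrite mxtrace_mulC mulmxA U'U mul1mx. Qed.

Definition mxform n (B : 'M[C]_n) (u w : 'cV[C]_n) : C := (adjmx u *m B *m w) 0 0.

Lemma mxformDl n (B : 'M[C]_n) u v w : mxform B (u + v) w = mxform B u w + mxform B v w.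
Proof. by rewrite /mxform adjmxD !mulmxDl mxE. Qed.

Lemma mxformDr n (B : 'M[C]_n) u v w : mxform B w (u + v) = mxform B w u + mxform B w v.
Proof. by rewrite /mxform mulmxDr mxE. Qed.

Lemma mxformZl n (B : 'M[C]_n) c u w : mxform B (c *: u) w = c^* * mxform B u w.
Proof. by rewrite /mxform adjmxZ -!scalemxAl !mxE. Qed.

Lemma mxformZr n (B : 'M[C]_n) c u w : mxform B u (c *: w) = c * mxform B u w.
Proof. by rewrite /mxform -scalemxAr mxE. Qed.

Lemma mxform_delta n (B : 'M[C]_n) i j : mxform B (delta_mx i 0) (delta_mx j 0) = B i j.
Proof. by rewrite /mxform adjmx_delta -rowE -colE !mxE. Qed.

Lemma conj_mxform n (B : 'M[C]_n) u w : (mxform B u w)^* = mxform (adjmx B) w u.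
Proof. by rewrite /mxform -adjmxE !adjmxM adjmxK mulmxA. Qed.

Lemma mxformB n (A B : 'M[C]_n) u w : mxform (A - B) u w = mxform A u w - mxform B u w.
Proof. by rewrite /mxform mulmxBr mulmxBl !mxE. Qed.

(* Polarization: evaluate on [u + w] and [u + 'i w] with [u], [w] basis vectors. *)
Lemma mxform_eq0 n (B : 'M[C]_n) : (forall v, mxform B v v = 0) -> B = 0.
Proof.
move=> B0; apply/matrixP => i j; rewrite mxE -mxform_delta.
set u := delta_mx i 0; set w := delta_mx j 0.
have := B0 (u + w); have := B0 (u + 'i *: w).
rewrite !(mxformDl, mxformDr, mxformZl, mxformZr) !B0 conjCi => h2 h1.
have e1 : mxform B w u = - mxform B u w.
  by apply/eqP; rewrite -addr_eq0 -h1; apply/eqP; ring.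
have /eqP : 'i * (mxform B u w *+ 2) = 0 by rewrite -h2 e1; ring.
by rewrite mulf_eq0 (negbTE (@neq0Ci _)) mulrn_eq0 /= => /eqP.
Qed.

End Adjoint.

Section Psd.
Variable R : realType.
Local Notation C := R[i].

Lemma psd_herm n (A : 'M[C]_n) : psd A -> adjmx A = A.
Proof.
move=> psdA; apply/eqP; rewrite -subr_eq0; apply/eqP/mxform_eq0 => v.
rewrite mxformB -conj_mxform conj_Creal ?subrr //.
by apply: ger0_real; apply: psdA.
Qed.

Lemma psd_conj m n (M : 'M[C]_(m, n)) (A : 'M[C]_m) : psd A -> psd (adjmx M *m A *m M).
Proof. by move=> psdA v; have := psdA (M *m v); rewrite adjmxM !mulmxA. Qed.

Lemma psd_diag n (d : 'rV[C]_n) : (forall i, 0 <= d 0 i) -> psd (diag_mx d).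
Proof.
move=> d_ge0 v; rewrite mxE sumr_ge0 // => k _.
by rewrite mul_mx_diag !mxE mulrAC mulr_ge0 1?mulrC ?mul_conjC_ge0.
Qed.

Lemma psd1 n : psd (1%:M : 'M[C]_n).
Proof.
rewrite (_ : 1%:M = diag_mx (const_mx 1)); last by apply/matrixP => i j; rewrite !mxE.
by apply: psd_diag => i; rewrite mxE ler01.
Qed.

Lemma psd_adjmul m n (X : 'M[C]_(m, n)) : psd (adjmx X *m X).
Proof. by have := psd_conj X (@psd1 m); rewrite mulmx1. Qed.

Lemma psdD n (A B : 'M[C]_n) : psd A -> psd B -> psd (A + B).
Proof. by move=> psdA psdB v; rewrite mulmxDr mulmxDl mxE addr_ge0. Qed.

Lemma psdZ n (c : C) (A : 'M[C]_n) : 0 <= c -> psd A -> psd (c *: A).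
Proof. by move=> c_ge0 psdA v; rewrite -scalemxAr -scalemxAl mxE mulr_ge0. Qed.

Lemma psd_diag_ge0 n (A : 'M[C]_n) i : psd A -> 0 <= A i i.
Proof. by move=> psdA; rewrite -mxform_delta; apply: psdA. Qed.

Lemma psd_tr_ge0 n (A : 'M[C]_n) : psd A -> 0 <= \tr A.
Proof. by move=> psdA; apply: sumr_ge0 => i _; apply: psd_diag_ge0. Qed.

Lemma psd_spectral n (A : 'M[C]_n) : psd A -> exists (U : 'M[C]_n) (d : 'rV[C]_n),
  [/\ U *m adjmx U = 1%:M, adjmx U *m U = 1%:M, forall i, 0 <= d 0 i &
      A = adjmx U *m diag_mx d *m U].
Proof.
move=> psdA; have hermA : A \is hermsymmx.
  by apply/is_hermitianmxP; rewrite expr0 scale1r -adjmx_trmxC psd_herm.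
have /orthomx_spectralP defA := hermitian_normalmx hermA.
have Uu := spectral_unitarymx A.
set U := spectralmx A in defA Uu; set d := spectral_diag A in defA.
have UU' : U *m adjmx U = 1%:M by rewrite adjmx_trmxC; apply/unitarymxP.
have U'U : adjmx U *m U = 1%:M.
  by rewrite adjmx_trmxC -invmx_unitary // mulVmx // unitarymx_unit.
rewrite invmx_unitary // -adjmx_trmxC in defA.
exists U, d; split => // i.
have := psd_diag_ge0 i (psd_conj (adjmx U) psdA).
by rewrite adjmxK defA !mulmxA UU' mul1mx -!mulmxA UU' mulmx1 mxE eqxx mulr1n.
Qed.

Lemma psd_sqrt_exists n (A : 'M[C]_n) : psd A -> exists S : 'M[C]_n, psd S /\ S *m S = A.
Proof.
move=> /psd_spectral [U [d [UU' _ d_ge0 ->]]].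
exists (adjmx U *m diag_mx (\row_i sqrtC (d 0 i)) *m U); split.
  by apply/psd_conj/psd_diag => i; rewrite mxE sqrtC_ge0.
rewrite -!mulmxA [U *m (_ *m _)]mulmxA UU' mul1mx.
rewrite [diag_mx _ *m (diag_mx _ *m _)]mulmxA mulmx_diag !mulmxA.
by do 2 congr (_ *m _); congr diag_mx; apply/rowP => i; rewrite !mxE -expr2 sqrtCK.
Qed.

Lemma psd_sqrtP n (A : 'M[C]_n) : psd A ->
  psd (psd_sqrt A) /\ psd_sqrt A *m psd_sqrt A = A.
Proof. by move=> psdA; apply: (xgetPex 0 (psd_sqrt_exists psdA)). Qed.

Lemma tr_psdM_ge0 n (A B : 'M[C]_n) : psd A -> psd B -> 0 <= \tr (A *m B).
Proof.
move=> psdA /psd_sqrtP [psdS <-].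
rewrite mulmxA mxtrace_mulC mulmxA -{1}(psd_herm psdS).
exact/psd_tr_ge0/psd_conj.
Qed.

Lemma psd_unitary_conj n (U A : 'M[C]_n) : psd A -> psd (U *m A *m adjmx U).
Proof. by move=> /(psd_conj (adjmx U)); rewrite adjmxK. Qed.

Lemma unitary_conj_diag n (U A : 'M[C]_n) (d : 'rV[C]_n) :
  U *m adjmx U = 1%:M -> A = adjmx U *m diag_mx d *m U -> U *m A *m adjmx U = diag_mx d.
Proof. by move=> UU' ->; rewrite !mulmxA UU' mul1mx -mulmxA UU' mulmx1. Qed.

Lemma psd_diag_sqr_le n (K : 'M[C]_n) i : psd K -> K i i ^+ 2 <= (K *m K) i i.
Proof.
move=> psdK; rewrite expr2 mxE (bigD1 i) //= lerDl sumr_ge0 // => k _.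
by rewrite -{2}(psd_herm psdK) adjmxE mul_conjC_ge0.
Qed.

Lemma tr_adjmul_eq0 m n (X : 'M[C]_(m, n)) : \tr (adjmx X *m X) = 0 -> X = 0.
Proof.
move=> /eqP; rewrite psumr_eq0 => [/allP tr0|j _]; last exact/psd_diag_ge0/psd_adjmul.
apply/matrixP => i j; rewrite mxE; move: (tr0 j (mem_index_enum j)).
rewrite mxE psumr_eq0 => [/allP/(_ i (mem_index_enum i))|k _]; rewrite adjmxE.
  by rewrite mulf_eq0 conjC_eq0 orbb => /eqP.
by rewrite mulrC mul_conjC_ge0.
Qed.

End Psd.

Section Fidelity.
Variable R : realType.
Local Notation C := R[i].

Lemma fidelityE n (rho sigma : 'M[C]_n) : psd rho -> psd sigma ->
  fidelity rho sigma =
  complex.Re (\tr (psd_sqrt (psd_sqrt sigma *m rho *m psd_sqrt sigma))) ^+ 2.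
Proof.
move=> /psd_sqrtP [psdR defR] /psd_sqrtP [psdQ _].
by rewrite /fidelity /trnorm adjmxM !psd_herm // !mulmxA -(mulmxA (psd_sqrt sigma)) defR.
Qed.

Lemma sqrt_mul_tr_le n (S G : 'M[C]_n) (c : R) : 0 <= c -> psd S -> psd G ->
  psd (S *m S - c%:C%C *: (G *m G)) -> Num.sqrt c * complex.Re (\tr G) <= complex.Re (\tr S).
Proof.
move=> c_ge0 psdS psdG.
have [U [d [UU' U'U d_ge0 /(unitary_conj_diag UU') US]]] := psd_spectral psdS.
(* In an eigenbasis of S: d_i^2 >= c (G^2)_ii >= c G_ii^2. *)
have psdG' := psd_unitary_conj U psdG; set G' := U *m G *m adjmx U in psdG'.
move=> /(psd_unitary_conj U).
rewrite mulmx_subZ !unitary_conjM // US -/G' mulmx_diag => psdD.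
rewrite -(mxtrace_unitary_conj G U'U) -(mxtrace_unitary_conj S U'U) US mxtrace_diag -/G'.
rewrite /mxtrace !raddf_sum /= mulr_sumr; apply: ler_sum => i _.
apply: sqrt_mul_le => //; first exact/Re_ge0.
have := psd_diag_ge0 i psdD.
rewrite 5!mxE eqxx mulr1n subr_ge0 -expr2 => hd.
have := le_trans (ler_wpM2l _ (psd_diag_sqr_le i psdG')) hd.
rewrite ler0c -(RRe_ge0 (psd_diag_ge0 i psdG')) -(RRe_ge0 (d_ge0 i)).
by rewrite -!rmorphXn -rmorphM lecR; apply.
Qed.

Lemma fidelity_ge n (rho Phi : 'M[C]_n) (p : R) : is_state Phi -> psd rho -> 0 <= p ->
  psd (rho - p%:C%C *: Phi) -> p <= fidelity rho Phi.
Proof.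
move=> [psdPhi trPhi] psdR p_ge0 /(psd_conj (psd_sqrt Phi)).
have [psdQ QQ] := psd_sqrtP psdPhi; set Q := psd_sqrt Phi in psdQ QQ *.
have [psdS SS] := psd_sqrtP (psd_conj Q psdR); rewrite psd_herm // in psdS SS.
have PhiPhi : Phi *m Phi = Q *m Phi *m Q by rewrite -QQ !mulmxA.
rewrite psd_herm // mulmx_subZ -SS -PhiPhi.
move=> /(sqrt_mul_tr_le p_ge0 psdS psdPhi); rewrite trPhi mulr1 fidelityE // -/Q.
by have := sqrtr_ge0 p; have := sqr_sqrtr p_ge0; nra.
Qed.

Lemma sqr_tr_le_diag_conj n (K X : 'M[C]_n) (q : 'rV[C]_n) : psd K -> psd X ->
  (forall i, 0 <= q 0 i) -> K *m K = diag_mx q *m X *m diag_mx q ->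
  complex.Re (\tr K) ^+ 2 <= (\sum_i complex.Re (q 0 i) ^+ 2) * complex.Re (\tr X).
Proof.
move=> psdK psdX q_ge0 KK; rewrite /mxtrace !raddf_sum /=.
apply: sqr_sum_le_mul_sum => i; rewrite ?sqr_ge0 ?Re_ge0 ?psd_diag_ge0 //.
have := psd_diag_sqr_le i psdK; rewrite KK mul_mx_diag mxE mul_diag_mx mxE.
rewrite -(RRe_ge0 (psd_diag_ge0 i psdK)) -(RRe_ge0 (q_ge0 i)).
rewrite -(RRe_ge0 (psd_diag_ge0 i psdX)) -!rmorphXn -!rmorphM lecR /=.
lra.
Qed.

Lemma fidelity_le_tr n (sigma Phi : 'M[C]_n) : psd sigma -> is_state Phi ->
  fidelity sigma Phi <= complex.Re (\tr sigma).
Proof.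
move=> psd_sigma [psdPhi trPhi]; have [psdQ QQ] := psd_sqrtP psdPhi.
have [U [q [UU' U'U q_ge0 /(unitary_conj_diag UU') UQ]]] := psd_spectral psdQ.
set Q := psd_sqrt Phi in psdQ QQ UQ *.
have psdQsQ : psd (Q *m sigma *m Q) by rewrite -{1}(psd_herm psdQ); apply: psd_conj.
have [psdS SS] := psd_sqrtP psdQsQ.
have sum_q : \sum_i complex.Re (q 0 i) ^+ 2 = 1.
  have := congr1 (@complex.Re R) trPhi.
  rewrite -QQ -(mxtrace_unitary_conj _ U'U) unitary_conjM // UQ.
  rewrite mulmx_diag mxtrace_diag raddf_sum /= => <-; apply: eq_bigr => i _.
  by rewrite mxE -{2}(RRe_ge0 (q_ge0 i)) ReCM.
rewrite fidelityE // -/Q -(mxtrace_unitary_conj _ U'U).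
rewrite -[\tr sigma](mxtrace_unitary_conj _ U'U).
have psdK := psd_unitary_conj U psdS; have psdX := psd_unitary_conj U psd_sigma.
apply: le_trans (sqr_tr_le_diag_conj psdK psdX q_ge0 _) _.
  by rewrite -unitary_conjM // SS !unitary_conjM // UQ.
by rewrite sum_q mul1r.
Qed.

Lemma psd_effect_sub_sqr n (P : 'M[C]_n) : is_effect P -> psd (P - P *m P).
Proof.
move=> [psdP psdE]; have [psdS SS] := psd_sqrtP psdP; set S := psd_sqrt P in psdS SS.
have SPS : S *m P *m S = P *m P by rewrite -SS !mulmxA.
by have := psd_conj S psdE; rewrite psd_herm // mulmxBr mulmxBl mulmx1 SS SPS.
Qed.

Lemma effect_mul_sqrt n (P Phi : 'M[C]_n) : is_effect P -> is_state Phi ->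
  1 <= complex.Re (\tr (P *m Phi)) -> P *m psd_sqrt Phi = psd_sqrt Phi.
Proof.
(* Tr[(1 - P) Phi] = 0 forces sqrt(1 - P) sqrt Phi = 0. *)
move=> [_ psdE] [psdPhi trPhi] hP.
have [psdQ QQ] := psd_sqrtP psdPhi; set Q := psd_sqrt Phi in psdQ QQ *.
have [psdT TT] := psd_sqrtP psdE; set T := psd_sqrt (1%:M - P) in psdT TT.
have psdQEQ : psd (Q *m (1%:M - P) *m Q) by rewrite -{1}(psd_herm psdQ); apply: psd_conj.
have trQEQ : complex.Re (\tr (Q *m (1%:M - P) *m Q)) <= 0.
  rewrite mxtrace_mulC mulmxA QQ mulmxBr mulmx1 linearB /= trPhi mxtrace_mulC raddfB /=.
  by rewrite subr_le0.
have TQ0 : T *m Q = 0.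
  apply: tr_adjmul_eq0; rewrite adjmxM !psd_herm // mulmxA -(mulmxA Q) TT.
  rewrite -(RRe_ge0 (psd_tr_ge0 psdQEQ)); congr (_%:C%C).
  by apply/le_anti; rewrite trQEQ Re_ge0 // psd_tr_ge0.
have : (1%:M - P) *m Q = 0 by rewrite -TT -mulmxA TQ0 mulmx0.
by rewrite mulmxBl mul1mx => /eqP; rewrite subr_eq0 => /eqP.
Qed.

Lemma fidelity_le_effect n (rho Phi P : 'M[C]_n) : is_state rho -> is_state Phi ->
  is_effect P -> 1 <= complex.Re (\tr (P *m Phi)) ->
  fidelity rho Phi <= complex.Re (\tr (P *m rho)).
Proof.
(* P fixes sqrt Phi, so F(rho, Phi) = F(P rho P, Phi) <= Tr[P^2 rho] <= Tr[P rho]. *)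
move=> [psdR _] statePhi effP hP; have PQ := effect_mul_sqrt effP statePhi hP.
have [psdQ _] := psd_sqrtP statePhi.1; have hermP := psd_herm effP.1.
have QP : psd_sqrt Phi *m P = psd_sqrt Phi.
  by rewrite -[LHS]adjmxK adjmxM hermP (psd_herm psdQ) PQ (psd_herm psdQ).
have psdPRP : psd (P *m rho *m P) by rewrite -{1}hermP; apply: psd_conj.
have -> : fidelity rho Phi = fidelity (P *m rho *m P) Phi.
  rewrite (fidelityE psdR statePhi.1) (fidelityE psdPRP statePhi.1).
  by rewrite !mulmxA QP -(mulmxA _ P) PQ.
apply: le_trans (fidelity_le_tr psdPRP statePhi) _.
rewrite mxtrace_mulC mulmxA -subr_ge0 -raddfB /= -[X in complex.Re X]linearB /=.
by rewrite -mulmxBl; apply/Re_ge0/tr_psdM_ge0/psdR/psd_effect_sub_sqr.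
Qed.

End Fidelity.

Section Log2.
Variable R : realType.

Lemma ln2_gt0 : (0 : R) < ln 2.
Proof. by apply: ln_gt0; rewrite ltr1n. Qed.

Lemma ler_log2 (a b : R) : 0 < a -> a <= b -> log2 a <= log2 b.
Proof.
move=> a_gt0 ab; rewrite /log2 ler_pM2r ?invr_gt0 ?ln2_gt0 //.
by rewrite ler_ln // posrE (lt_le_trans a_gt0 ab).
Qed.

Lemma log2M (a b : R) : 0 < a -> 0 < b -> log2 (a * b) = log2 a + log2 b.
Proof. by move=> a_gt0 b_gt0; rewrite /log2 lnM ?posrE // mulrDl. Qed.

Lemma log2V (a : R) : 0 < a -> log2 a^-1 = - log2 a.
Proof. by move=> a_gt0; rewrite /log2 lnV ?posrE // mulNr. Qed.

Lemma log2_ge0 (a : R) : 1 <= a -> 0 <= log2 a.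
Proof. by move=> a_ge1; rewrite -(mul0r (ln 2)^-1) -ln1; apply: ler_log2. Qed.

End Log2.

Section Mixtures.
Variables (R : realType) (n : nat).
Local Notation C := R[i].
Local Notation M := 'M[C]_n.

Definition mix (t : R) (rho tau : M) : M := ((1 + t)^-1)%:C%C *: (rho + t%:C%C *: tau).

Lemma Re_tr_mulZr (P X : M) (c : R) :
  complex.Re (\tr (P *m (c%:C%C *: X))) = c * complex.Re (\tr (P *m X)).
Proof. by rewrite -scalemxAr linearZ /= ReCM. Qed.

Lemma Re_tr_mulZl (P X : M) (c : R) :
  complex.Re (\tr ((c%:C%C *: P) *m X)) = c * complex.Re (\tr (P *m X)).
Proof. by rewrite -scalemxAl linearZ /= ReCM. Qed.

Lemma Re_tr_mulDr (P X Y : M) : complex.Re (\tr (P *m (X + Y))) =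
  complex.Re (\tr (P *m X)) + complex.Re (\tr (P *m Y)).
Proof. by rewrite mulmxDr linearD /= raddfD. Qed.

Lemma Re_tr_effect_state_ge0 (P X : M) : is_effect P -> is_state X ->
  0 <= complex.Re (\tr (P *m X)).
Proof. by move=> [psdP _] [psdX _]; apply/Re_ge0/tr_psdM_ge0. Qed.

Lemma psd_scaleR (c : R) (A : M) : 0 <= c -> psd A -> psd (c%:C%C *: A).
Proof. by move=> c_ge0; apply: psdZ; rewrite ler0c. Qed.

Lemma effectZ (c : R) (P : M) : 0 <= c <= 1 -> is_effect P -> is_effect (c%:C%C *: P).
Proof.
move=> /andP[c_ge0 c_le1] [psdP psdE]; split; first exact: psd_scaleR.
have -> : 1%:M - c%:C%C *: P = (1 - c)%:C%C *: 1%:M + c%:C%C *: (1%:M - P).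
  by rewrite scalerBr addrA -scalerDl rmorphB /= rmorph1 subrK scale1r.
by apply: psdD; apply: psd_scaleR => //; [rewrite subr_ge0 | exact: psd1].
Qed.

Lemma mix_state (t : R) (rho tau : M) : 0 <= t -> is_state rho -> is_state tau ->
  is_state (mix t rho tau).
Proof.
move=> t_ge0 [psdR trR] [psdT trT]; split.
  apply: psd_scaleR; first by rewrite invr_ge0 addr_ge0.
  by apply: psdD => //; apply: psd_scaleR.
rewrite linearZ /= linearD /= linearZ /= trR trT mulr1 -(rmorph1 (real_complex R)).
by rewrite -rmorphD -rmorphM mulVf // gt_eqF // ltr_wpDr.
Qed.

Lemma Re_tr_mix_ge (P rho tau : M) (t : R) : is_effect P -> is_state tau -> 0 <= t ->
  (1 + t)^-1 * complex.Re (\tr (P *m rho)) <= complex.Re (\tr (P *m mix t rho tau)).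
Proof.
move=> effP stateT t_ge0; rewrite Re_tr_mulZr Re_tr_mulDr Re_tr_mulZr.
by rewrite ler_wpM2l ?invr_ge0 ?addr_ge0 // lerDl mulr_ge0 // Re_tr_effect_state_ge0.
Qed.

Lemma mix_fidelity_ge (t : R) (rho tau : M) : 0 <= t -> is_state rho -> is_state tau ->
  (1 + t)^-1 <= fidelity (mix t rho tau) rho.
Proof.
move=> t_ge0 stateR stateT; have t1_gt0 : 0 < 1 + t := ltr_wpDr t_ge0 ltr01.
apply: fidelity_ge; rewrite ?invr_ge0 ?ltW //; first exact: (mix_state t_ge0 stateR stateT).1.
have -> : mix t rho tau - ((1 + t)^-1)%:C%C *: rho = ((1 + t)^-1 * t)%:C%C *: tau.
  by apply/matrixP => i j; rewrite !mxE rmorphM; ring.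
by apply: (psd_scaleR _ stateT.1); apply: mulr_ge0 => //; rewrite invr_ge0 ltW.
Qed.

Lemma scale_mix (a b t u s : R) (X Y : M) : a * (b * t + u) = a * b * s ->
  a%:C%C *: (b%:C%C *: (X + t%:C%C *: Y) + u%:C%C *: Y) = (a * b)%:C%C *: (X + s%:C%C *: Y).
Proof.
move=> /(congr1 (real_complex R)); rewrite !rmorphM rmorphD rmorphM /= => e.
apply/matrixP => i j; rewrite !mxE.
transitivity (a%:C%C * b%:C%C * X i j + a%:C%C * (b%:C%C * t%:C%C + u%:C%C) * Y i j).
  by ring.
by rewrite e; ring.
Qed.

Lemma mix_weightE (t s : R) : 0 <= t -> 1 + (s - t) / (1 + t) = (1 + s) / (1 + t).
Proof.
move=> t_ge0; have t1_neq0 : 1 + t != 0 := lt0r_neq0 (ltr_wpDr t_ge0 ltr01).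
by apply: (mulIf t1_neq0); rewrite mulrDl !divfK //; ring.
Qed.

Lemma mix_mix (t s : R) (rho tau : M) : 0 <= t ->
  mix ((s - t) / (1 + t)) (mix t rho tau) tau = mix s rho tau.
Proof.
move=> t_ge0; have t1_neq0 : 1 + t != 0 := lt0r_neq0 (ltr_wpDr t_ge0 ltr01).
rewrite /mix mix_weightE // invf_div (scale_mix (s := s)).
  by rewrite mulrAC divff // mul1r.
by rewrite -mulrA; congr (_ * _); field.
Qed.

End Mixtures.

Lemma le_maxe_subr_ereal_inf (R : realType) (A : set (\bar R)) (y : \bar R) (L : R) :
  (forall x, A x -> y <= maxe (x - L%:E) 0)%E -> (y <= maxe (ereal_inf A - L%:E) 0)%E.
Proof.
move=> hA; case: (leP y 0%E) => y0; first by rewrite le_max y0 orbT.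
rewrite le_max leeBrDr //; apply/orP; left; apply/ereal_infP => x Ax.
by have := hA x Ax; rewrite le_max (leNgt y 0%E) y0 orbF leeBrDr.
Qed.

Section Entropies.
Variables (R : realType) (n : nat).
Local Notation C := R[i].
Local Notation M := 'M[C]_n.
Local Notation L eps := (log2 (1 - eps)^-1).

Definition Dmix (T S : set M) (rho : M) : \bar R :=
  ereal_inf [set (log2 (1 + s))%:E | s in
    [set s : R | 0 <= s /\ exists tau, T tau /\ S (mix s rho tau)]].

Definition Dmix_eps (eps : R) (T S : set M) (rho : M) : \bar R :=
  ereal_inf [set Dmix T S rho' | rho' in
    [set rho' : M | is_state rho' /\ 1 - eps <= fidelity rho' rho]].

Lemma DmaxFE (S : set M) rho : DmaxF S rho = Dmix (@is_state R n) S rho.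
Proof. by []. Qed.

Lemma DsFE (S : set M) rho : DsF S rho = Dmix S S rho.
Proof. by []. Qed.

Lemma DmaxF_epsE eps (S : set M) rho :
  DmaxF_eps eps S rho = Dmix_eps eps (@is_state R n) S rho.
Proof. by []. Qed.

Lemma DsF_epsE eps (S : set M) rho : DsF_eps eps S rho = Dmix_eps eps S S rho.
Proof. by []. Qed.

Lemma DH_le_mlog2 (eps : R) (rho sigma : M) (c : R) : 0 < c ->
  (forall P, is_effect P -> 1 - eps <= complex.Re (\tr (P *m rho)) ->
     c <= complex.Re (\tr (P *m sigma))) ->
  (DH eps rho sigma <= (- log2 c)%:E)%E.
Proof.
move=> c_gt0 hc; apply/ereal_supP => _ [P [effP hP] <-]; have le_c := hc P effP hP.
rewrite /mlog2 ifF; last by apply/negbTE; rewrite -ltNge (lt_le_trans c_gt0 le_c).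
by rewrite lee_fin lerN2 ler_log2.
Qed.

Lemma DH_ge_add (eps : R) (rho sigma : M) : 0 <= eps < 1 ->
  (DH 0 rho sigma + (L eps)%:E <= DH eps rho sigma)%E.
Proof.
move=> /andP[eps_ge0 eps_lt1]; have eps1_gt0 : 0 < 1 - eps by rewrite subr_gt0.
rewrite -leeBrDr //; apply/ereal_supP => _ [P [effP hP] <-]; rewrite subr0 in hP.
set P' := (1 - eps)%:C%C *: P.
have effP' : is_effect P' by apply: effectZ => //; rewrite ltW //= lerBlDr lerDl.
have : (mlog2 (complex.Re (\tr (P' *m sigma))) <= DH eps rho sigma)%E.
  apply: ereal_sup_ubound; exists P' => //; split => //.
  by rewrite Re_tr_mulZl -{1}[1 - eps]mulr1 ler_wpM2l // ltW.
rewrite Re_tr_mulZl /mlog2; case: (lerP (complex.Re (\tr (P *m sigma))) 0) => tr_P.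
  by rewrite ifT ?pmulr_rle0 // leye_eq => /eqP ->.
rewrite ifF; last by apply/negbTE; rewrite -ltNge mulr_gt0.
rewrite leeBrDr // -EFinD => /(le_trans _); apply.
by rewrite lee_fin log2M // log2V //; lra.
Qed.

Lemma DH_over_ge_add (eps : R) (S : set M) (rho : M) : 0 <= eps < 1 ->
  (DH_over 0 S rho + (L eps)%:E <= DH_over eps S rho)%E.
Proof.
move=> heps; apply/ereal_infP => _ [sigma Ssigma <-].
apply: le_trans (DH_ge_add rho sigma heps); rewrite leeD2r //.
by apply: ereal_inf_lbound; exists sigma.
Qed.

Lemma DH_over_anti (eps : R) (S1 S2 : set M) (rho : M) : S1 `<=` S2 ->
  (DH_over eps S2 rho <= DH_over eps S1 rho)%E.
Proof.
move=> S12; apply/ereal_infP => _ [sigma S1sigma <-].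
by apply: ereal_inf_lbound; exists sigma => //; apply: S12.
Qed.

Lemma log2_mix_eps (eps s : R) : 0 <= eps < 1 -> 0 <= s ->
  - log2 ((1 + s)^-1 * (1 - eps)) = log2 (1 + s) + L eps.
Proof.
move=> /andP[_ eps_lt1] s_ge0; have s1_gt0 : 0 < 1 + s := ltr_wpDr s_ge0 ltr01.
by rewrite log2M ?invr_gt0 ?subr_gt0 // !log2V ?subr_gt0 //; lra.
Qed.

Lemma DH_over_le_Dmix_add (T S : set M) (Phi : M) (eps : R) :
  T `<=` @is_state R n -> is_state Phi -> 0 <= eps < 1 ->
  (DH_over eps S Phi <= Dmix T S Phi + (L eps)%:E)%E.
Proof.
move=> Tstate statePhi heps; have /andP[_ eps_lt1] := heps.
rewrite -leeBlDr //; apply/ereal_infP => _ [s [s_ge0 [tau [Ttau Smix]]] <-].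
have s1_gt0 : 0 < 1 + s := ltr_wpDr s_ge0 ltr01.
rewrite leeBlDr // -EFinD -log2_mix_eps //.
apply: (@le_trans _ _ (DH eps Phi (mix s Phi tau))).
  by apply: ereal_inf_lbound; exists (mix s Phi tau).
apply: DH_le_mlog2; first by rewrite mulr_gt0 ?invr_gt0 ?subr_gt0.
move=> P effP hP; apply: le_trans (Re_tr_mix_ge _ effP (Tstate _ Ttau) s_ge0).
by rewrite ler_wpM2l // invr_ge0 ltW.
Qed.

Lemma Dmix_eps_ge (T S : set M) (Phi : M) (eps : R) (r : \bar R) :
  T `<=` @is_state R n -> is_state Phi -> 0 <= eps < 1 -> (r <= DH_over 0 S Phi)%E ->
  (maxe (r - (L eps)%:E) 0 <= Dmix_eps eps T S Phi)%E.
Proof.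
move=> Tstate statePhi heps hr; have /andP[eps_ge0 eps_lt1] := heps.
apply/ereal_infP => _ [rho' [stateR' fid] <-].
apply/ereal_infP => _ [s [s_ge0 [tau [Ttau Smix]]] <-].
have s1_gt0 : 0 < 1 + s := ltr_wpDr s_ge0 ltr01.
rewrite ge_max lee_fin log2_ge0 ?lerDl // andbT leeBlDr //.
have r_le : (r <= DH 0 Phi (mix s rho' tau))%E.
  by apply: le_trans hr _; apply: ereal_inf_lbound; exists (mix s rho' tau).
apply: le_trans r_le _; rewrite -EFinD -log2_mix_eps //.
apply: DH_le_mlog2; first by rewrite mulr_gt0 ?invr_gt0 ?subr_gt0.
move=> P effP hP; apply: le_trans (Re_tr_mix_ge _ effP (Tstate _ Ttau) s_ge0).
apply: ler_wpM2l; first by rewrite invr_ge0 ltW.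
apply: (le_trans fid).
by apply: fidelity_le_effect => //; rewrite subr0 in hP.
Qed.

Lemma Dmix_mix_le (T S : set M) (rho tau : M) (t s : R) : T tau -> 0 <= t <= s ->
  S (mix s rho tau) -> (Dmix T S (mix t rho tau) <= (log2 (1 + s) - log2 (1 + t))%:E)%E.
Proof.
move=> Ttau /andP[t_ge0 ts] Smix; have t1_gt0 : 0 < 1 + t := ltr_wpDr t_ge0 ltr01.
have s1_gt0 : 0 < 1 + s := ltr_wpDr (le_trans t_ge0 ts) ltr01.
rewrite -log2V // -log2M ?invr_gt0 // -mix_weightE //.
apply: ereal_inf_lbound; exists ((s - t) / (1 + t)) => //; split.
  by apply: divr_ge0; [rewrite subr_ge0 | exact: ltW].
by exists tau; rewrite mix_mix.
Qed.

Lemma Dmix_eps_le (T S : set M) (Phi : M) (eps : R) :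
  T `<=` @is_state R n -> is_state Phi -> 0 <= eps < 1 ->
  (Dmix_eps eps T S Phi <= maxe (Dmix T S Phi - (L eps)%:E) 0)%E.
Proof.
move=> Tstate statePhi /andP[eps_ge0 eps_lt1].
apply: le_maxe_subr_ereal_inf => _ [s [s_ge0 [tau [Ttau Smix]]] <-].
have mix_le u : 0 <= u <= s -> 1 - eps <= (1 + u)^-1 ->
    (Dmix_eps eps T S Phi <= (log2 (1 + s) - log2 (1 + u))%:E)%E.
  move=> /[dup] /andP[u_ge0 _] us hu; apply: le_trans (Dmix_mix_le Ttau us Smix).
  apply: ereal_inf_lbound; exists (mix u Phi tau) => //; split.
    exact: mix_state (Tstate _ Ttau).
  exact: le_trans hu (mix_fidelity_ge _ _ (Tstate _ Ttau)).
have eps1_gt0 : 0 < 1 - eps by rewrite subr_gt0.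
pose t := eps / (1 - eps); have t_ge0 : 0 <= t by apply: divr_ge0 => //; apply: ltW.
have t1_gt0 : 0 < 1 + t := ltr_wpDr t_ge0 ltr01.
have s1_gt0 : 0 < 1 + s := ltr_wpDr s_ge0 ltr01.
have t1E : 1 + t = (1 - eps)^-1.
  by rewrite /t -[X in X + _](divff (lt0r_neq0 eps1_gt0)) -mulrDl subrK mul1r.
case: (leP t s) => [ts|st].
  apply: le_trans (mix_le t _ _) _; rewrite ?t_ge0 ?t1E ?invrK //.
  by rewrite le_max -EFinB lexx.
apply: le_trans (mix_le s _ _) _; rewrite ?s_ge0 ?lexx //.
  by rewrite -[1 - eps]invrK -t1E lef_pV2 ?posrE // lerD2l ltW.
by rewrite subrr le_max lexx orbT.
Qed.

Lemma Dmix_anti (T1 T2 S : set M) (rho : M) : T1 `<=` T2 ->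
  (Dmix T2 S rho <= Dmix T1 S rho)%E.
Proof.
move=> T12; apply/ereal_infP => _ [s [s_ge0 [tau [T1tau Smix]]] <-].
by apply: ereal_inf_lbound; exists s => //; split => //; exists tau; split => //; apply: T12.
Qed.

Lemma Dmix_eps_anti (eps : R) (T1 T2 S : set M) (rho : M) : T1 `<=` T2 ->
  (Dmix_eps eps T2 S rho <= Dmix_eps eps T1 S rho)%E.
Proof.
move=> T12; apply/ereal_infP => _ [rho' hrho' <-].
apply: le_trans (Dmix_anti S rho' T12).
by apply: ereal_inf_lbound; exists rho'.
Qed.

Lemma subset_aff (F : set M) : F `<=` aff F.
Proof.
move=> X FX; exists 1%N, (fun _ => 1), (fun _ => X).
by rewrite !big_ord1 rmorph1 scale1r.
Qed.

End Entropies.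

Section Smoothing.
Variables (R : realType) (n : nat) (F : set 'M[R[i]]_n) (Phi : 'M[R[i]]_n).
Hypothesis statePhi : is_state Phi.
Local Notation L eps := (log2 (1 - eps)^-1).

Lemma smoothing_of_Dmin_eq_Ds (r : \bar R) (eps : R) : F `<=` @is_state R n ->
  DminF F Phi = r -> DsF F Phi = r -> 0 <= eps < 1 ->
  DH_over eps F Phi = (r + (L eps)%:E)%E /\
  DmaxF_eps eps F Phi = maxe (r - (L eps)%:E)%E 0%E /\
  DsF_eps eps F Phi = maxe (r - (L eps)%:E)%E 0%E.
Proof.
move=> Fstate Dmin_r Ds_r heps.
have DH_ge := DH_over_ge_add F Phi heps; rewrite -/(DminF F Phi) Dmin_r in DH_ge.
have DH_le := DH_over_le_Dmix_add F Fstate statePhi heps; rewrite -DsFE Ds_r in DH_le.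
have r_le : (r <= DH_over 0 F Phi)%E by rewrite -Dmin_r.
have Dmax_ge := Dmix_eps_ge (@subset_refl _ _) statePhi heps r_le.
have Ds_ge := Dmix_eps_ge Fstate statePhi heps r_le.
have Ds_le := Dmix_eps_le F Fstate statePhi heps; rewrite -DsFE Ds_r in Ds_le.
have Dmax_le_Ds := Dmix_eps_anti eps F Phi Fstate.
rewrite DmaxF_epsE DsF_epsE; split; [|split]; apply/le_anti.
- by rewrite DH_le DH_ge.
- by rewrite Dmax_ge (le_trans Dmax_le_Ds Ds_le).
- by rewrite Ds_le Ds_ge.
Qed.

Lemma smoothing_of_DminAff_eq_Dmax (r : \bar R) (eps : R) :
  DminAff F Phi = r -> DmaxF F Phi = r -> 0 <= eps < 1 ->
  DH_over eps (aff F) Phi = (r + (L eps)%:E)%E /\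
  DH_over eps F Phi = (r + (L eps)%:E)%E /\
  DmaxF_eps eps F Phi = maxe (r - (L eps)%:E)%E 0%E.
Proof.
move=> Dmin_r Dmax_r heps.
have DH_ge := DH_over_ge_add (aff F) Phi heps; rewrite -/(DminAff F Phi) Dmin_r in DH_ge.
have DH_le := DH_over_le_Dmix_add F (@subset_refl _ _) statePhi heps.
rewrite -DmaxFE Dmax_r in DH_le.
have DH_aff := DH_over_anti eps Phi (@subset_aff R n F).
have r_le : (r <= DH_over 0 F Phi)%E by rewrite -Dmin_r; apply/DH_over_anti/subset_aff.
have Dmax_ge := Dmix_eps_ge (@subset_refl _ _) statePhi heps r_le.
have Dmax_le := Dmix_eps_le F (@subset_refl _ _) statePhi heps.
rewrite -DmaxFE Dmax_r in Dmax_le.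
rewrite DmaxF_epsE; split; [|split]; apply/le_anti.
- by rewrite (le_trans DH_aff DH_le) DH_ge.
- by rewrite DH_le (le_trans DH_ge DH_aff).
- by rewrite Dmax_le Dmax_ge.
Qed.

End Smoothing.

Theorem proposition1 (R : realType) (n : nat) (F : set 'M[R[i]]_n)
  (Phi : 'M[R[i]]_n) :
  (forall sigma, F sigma -> is_state sigma) ->
  convex_states F -> closed_mx F ->
  is_state Phi ->
  (forall r : \bar R, DminF F Phi = r -> DsF F Phi = r ->
     forall eps : R, 0 <= eps < 1 ->
       DH_over eps F Phi = (r + (log2 (1 - eps)^-1)%:E)%E /\
       DmaxF_eps eps F Phi = maxe (r - (log2 (1 - eps)^-1)%:E)%E 0%E /\
       DsF_eps eps F Phi = maxe (r - (log2 (1 - eps)^-1)%:E)%E 0%E) /\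
  (forall r : \bar R, DminAff F Phi = r -> DmaxF F Phi = r ->
     forall eps : R, 0 <= eps < 1 ->
       DH_over eps (aff F) Phi = (r + (log2 (1 - eps)^-1)%:E)%E /\
       DH_over eps F Phi = (r + (log2 (1 - eps)^-1)%:E)%E /\
       DmaxF_eps eps F Phi = maxe (r - (log2 (1 - eps)^-1)%:E)%E 0%E).
Proof.
move=> Fstate _ _ statePhi; split=> r Dmin_r D_r eps heps.
  exact: smoothing_of_Dmin_eq_Ds.
exact: smoothing_of_DminAff_eq_Dmax.
Qed.
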